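(* Let $r,i,m$ be positive integers with $\gcd(r-i,2^m+1)=1$ and $\gcd(r,i(2^m-1))=1$, and let $b\in\mathbb{F}_{2^{2m}}^*$ satisfy $b^{\frac{2^{2m}-1}{\gcd(i(2^m-1),\,2^{2m}-1)}}\neq 1$ and $b^{2^m+1}=1$. Then the polynomial \[ f(x)=x^{i(2^m-1)+r}+bx^r \] induces a bijection of $\mathbb{F}_{2^{2m}}^*$ (and hence is a permutation polynomial of $\mathbb{F}_{2^{2m}}$).
   Context: A polynomial is a permutation polynomial of a finite field if it induces a bijection of that field. *)

From HB Require Import structures.
From mathcomp Require Import all_boot all_order all_algebra all_field.
Set Implicit Arguments. Unset Strict Implicit. Unset Printing Implicit Defensive.
Import GRing.Theory.
Local Open Scope ring_scope.

Definition bij_on_units (F : fieldType) (f : F -> F) : Prop :=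
  [/\ (forall x, x != 0 -> f x != 0),
      {in [pred x | x != 0] &, injective f} &
      (forall y, y != 0 -> exists2 x, x != 0 & f x = y)].

Definition perm_poly (F : fieldType) (p : {poly F}) : Prop :=
  bijective (fun x : F => p.[x]).

From HB Require Import structures.
From mathcomp Require Import all_boot all_order all_algebra all_field.
Set Implicit Arguments. Unset Strict Implicit. Unset Printing Implicit Defensive.
Import GRing.Theory.
Local Open Scope ring_scope.

(* Let q = 2^m, so that F = GF(q^2), and write u = x^(q-1) for x in F^*;
   u lies in the group U of (q+1)-th roots of unity, as does b.  Then
       f(x) = x^r (u^i + b).
   1. The factor u^i + b never vanishes: u^i = x^(i(q-1)) is killed by
      (q^2-1)/gcd(i(q-1), q^2-1), whereas b = -b is not (characteristic 2).
   2. Since v^q = v^-1 on U and Frobenius is additive, f(x)^q u^i b = u^r f(x),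
      i.e. u^(r-i) = f(x)^(q-1) b is determined by f(x).
   3. If f(x) = f(y) with x, y nonzero, then (u_x/u_y)^(r-i) = 1 and
      (u_x/u_y)^(q+1) = 1; as gcd(|r-i|, q+1) = 1 this gives u_x = u_y, hence
      x^r = y^r, and with x^(q-1) = y^(q-1) and gcd(r, q-1) = 1, x = y.
   4. f(0) = 0 and f is injective on the finite field, hence bijective. *)

Lemma expf_card_pred1 (F : finFieldType) (x : F) : x != 0 -> x ^+ #|F|.-1 = 1.
Proof.
move=> x0; apply: (mulIf x0); rewrite mul1r -exprSr prednK ?expf_card //.
by apply/card_gt0P; exists x.
Qed.

Lemma pow_gcd_eq1 (F : finFieldType) (x : F) (a : nat) : x != 0 ->
  (x ^+ a) ^+ (#|F|.-1 %/ gcdn a #|F|.-1) = 1.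
Proof.
by move=> x0; rewrite -exprM muln_divCA_gcd exprM expf_card_pred1 // expr1n.
Qed.

Lemma pow1_coprime (F : fieldType) (w : F) (a n : nat) :
  coprime a n -> w ^+ a = 1 -> w ^+ n = 1 -> w = 1.
Proof.
case: a => [|a] co wa wn.
  by move: co; rewrite /coprime gcd0n => /eqP n1; rewrite n1 expr1 in wn.
have [k _ dvd_a] := Bezoutl n (ltn0Sn a).
move: (expr_dvd wa dvd_a); rewrite (eqP co) exprD expr1 mulnC exprM wn.
by rewrite expr1n mulr1.
Qed.

Lemma expr_dist_eq1 (F : fieldType) (w : F) (a c : nat) :
  w != 0 -> w ^+ a = w ^+ c -> w ^+ `|a - c| = 1.
Proof.
wlog le_ca : a c / (c <= a)%N => [hwlog|] w0 e.
  by case: (leqP c a) => [/hwlog|/ltnW/hwlog]; [apply|rewrite distnC; apply].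
rewrite distnEl //; apply: (mulIf (expf_neq0 c w0)).
by rewrite mul1r -exprD subnK.
Qed.

Lemma div_expr_eq1 (F : fieldType) (u v : F) (k : nat) :
  v != 0 -> u ^+ k = v ^+ k -> (u / v) ^+ k = 1.
Proof. by move=> v0 e; rewrite expr_div_n e divff // expf_neq0. Qed.

Section TwistedMonomial.

Variables (F : finFieldType) (q r i : nat) (b : F).
Hypothesis card_F : #|F| = (q * q)%N.
Hypothesis q_pchar : [pchar F].-nat q.
Hypothesis b_norm1 : b ^+ (q + 1) = 1.
Hypothesis b_not_power :
  (- b) ^+ ((q * q - 1) %/ gcdn (i * (q - 1)) (q * q - 1)) != 1.
Hypothesis coprime_ri : coprime `|r - i| (q + 1).
Hypothesis coprime_rq : coprime r (q - 1).

Definition fval (x : F) : F := x ^+ r * ((x ^+ (q - 1)) ^+ i + b).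

Lemma q_gt0 : (0 < q)%N.
Proof.
have : (0 < #|F|)%N by apply/card_gt0P; exists 0.
by rewrite card_F muln_gt0 => /andP[].
Qed.

Lemma card_F_pred : #|F|.-1 = ((q - 1) * (q + 1))%N.
Proof. by rewrite card_F -subn1 -subn_sqr mulnn exp1n. Qed.

Lemma frobD (x y : F) : (x + y) ^+ q = x ^+ q + y ^+ q.
Proof. exact: exprDn_pchar. Qed.

Lemma norm_unit (x : F) : x != 0 -> (x ^+ (q - 1)) ^+ (q + 1) = 1.
Proof. by move=> x0; rewrite -exprM -card_F_pred expf_card_pred1. Qed.

Lemma fval_factor_neq0 (x : F) : x != 0 -> (x ^+ (q - 1)) ^+ i + b != 0.
Proof.
move=> x0; rewrite addr_eq0; apply: contra b_not_power => /eqP <-.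
have := pow_gcd_eq1 (i * (q - 1))%N x0.
by rewrite card_F -subn1 (mulnC i) exprM => ->.
Qed.

Lemma fval_neq0 (x : F) : x != 0 -> fval x != 0.
Proof. by move=> x0; rewrite mulf_neq0 ?expf_neq0 ?fval_factor_neq0. Qed.

Lemma fval_frob (x : F) : x != 0 ->
  let u := x ^+ (q - 1) in fval x ^+ q * b * u ^+ i = u ^+ r * fval x.
Proof.
move=> x0 u; have u_norm1 : u ^+ q * u = 1 by rewrite -exprSr -addn1 norm_unit.
have xq : x ^+ q = u * x by rewrite -exprSr subn1 prednK ?q_gt0.
have ui_conj : (u ^+ i) ^+ q * u ^+ i = 1.
  by rewrite -exprM mulnC exprM -exprMn u_norm1 expr1n.
have b_conj : b ^+ q * b = 1 by rewrite -exprSr -addn1.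
rewrite /fval -/u exprMn -exprM mulnC exprM xq exprMn frobD.
rewrite -!mulrA; congr (_ * (_ * _)).
by rewrite mulrDl mulrCA ui_conj mulr1 mulrA b_conj mul1r addrC.
Qed.

Lemma fval_unit_ratio (x : F) : x != 0 ->
  let u := x ^+ (q - 1) in u ^+ r / u ^+ i = fval x ^+ q * b / fval x.
Proof.
move=> x0 u; have u0 : u != 0 by rewrite expf_neq0.
by apply/eqP; rewrite eqr_div ?expf_neq0 ?fval_neq0 // fval_frob.
Qed.

Lemma fval_inj_units : {in [pred x | x != 0] &, injective fval}.
Proof.
move=> x y; rewrite !inE => x0 y0 fxy.
set ux := x ^+ (q - 1); set uy := y ^+ (q - 1).
have ux0 : ux != 0 by rewrite expf_neq0.
have uy0 : uy != 0 by rewrite expf_neq0.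
have w_ri : (ux / uy) ^+ r = (ux / uy) ^+ i.
  have := fval_unit_ratio x0; rewrite fxy -(fval_unit_ratio y0) -/ux -/uy.
  move/eqP; rewrite eqr_div ?expf_neq0 // => /eqP e.
  by apply/eqP; rewrite !expr_div_n eqr_div ?expf_neq0 // e mulrC.
have uxy : ux = uy.
  apply: divr1_eq; apply: (pow1_coprime coprime_ri).
    by apply: expr_dist_eq1 w_ri; rewrite mulf_neq0 ?invr_eq0.
  by rewrite expr_div_n !norm_unit // divr1.
have xr : x ^+ r = y ^+ r.
  by move: fxy; rewrite /fval -/ux -/uy uxy => /(mulIf (fval_factor_neq0 y0)).
apply: divr1_eq; apply: (pow1_coprime coprime_rq).
  exact: div_expr_eq1 xr.
exact: div_expr_eq1 uxy.
Qed.

Lemma fval0 : (0 < r)%N -> fval 0 = 0.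
Proof. by move=> r_gt0; rewrite /fval expr0n gtn_eqF // mul0r. Qed.

Lemma fval_bij : (0 < r)%N -> bijective fval.
Proof.
move=> r_gt0; apply: injF_bij => x y.
have [-> | x0] := eqVneq x 0; have [-> | y0] := eqVneq y 0 => //.
- by rewrite fval0 // => /esym/eqP; rewrite (negbTE (fval_neq0 y0)).
- by rewrite fval0 // => /eqP; rewrite (negbTE (fval_neq0 x0)).
- exact: fval_inj_units.
Qed.

End TwistedMonomial.

Lemma bij_on_units_of_bij (F : fieldType) (g : F -> F) :
  g 0 = 0 -> bijective g -> bij_on_units g.
Proof.
move=> g0 [h gK hK]; split.
- move=> x; apply: contra => /eqP gx0.
  by rewrite -(gK x) gx0 -{1}g0 gK.
- by move=> x y _ _; apply: (can_inj gK).
- move=> y y0; exists (h y) => //; apply: contra y0 => /eqP hy0.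
  by rewrite -(hK y) hy0 g0.
Qed.

Theorem proposition4 (F : finFieldType) (r i m : nat) (b : F)
  (hF : #|F| = (2 ^ (2 * m))%N)
  (hr : (0 < r)%N) (hi : (0 < i)%N) (hm : (0 < m)%N)
  (h1 : coprime `|r - i| (2 ^ m + 1))
  (h2 : coprime r (i * (2 ^ m - 1)))
  (hb0 : b != 0)
  (hb1 : b ^+ ((2 ^ (2 * m) - 1) %/ gcdn (i * (2 ^ m - 1)) (2 ^ (2 * m) - 1)) != 1)
  (hb2 : b ^+ (2 ^ m + 1) = 1) :
  let f : {poly F} := 'X ^+ (i * (2 ^ m - 1) + r) + b *: 'X ^+ r in
  bij_on_units (fun x => f.[x]) /\ perm_poly f.
Proof.
move=> f.
have char2 : (2%N \in [pchar F]) := card_finPcharP hF (isT : prime 2).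
have card_F : #|F| = (2 ^ m * 2 ^ m)%N by rewrite hF -expnD addnn -mul2n.
have q_pchar : [pchar F].-nat (2 ^ m)%N by rewrite pnatX pnatE ?char2.
have b_not_power : (- b) ^+ ((2 ^ m * 2 ^ m - 1)
    %/ gcdn (i * (2 ^ m - 1)) (2 ^ m * 2 ^ m - 1)) != 1.
  by rewrite (oppr_pchar2 char2) -card_F hF.
have coprime_rq : coprime r (2 ^ m - 1) by move: h2; rewrite coprimeMr => /andP[].
have f_eval : fval (2 ^ m)%N r i b =1 (fun x => f.[x]).
  move=> x; rewrite /f hornerD hornerZ !hornerXn exprD (mulnC i) exprM.
  by rewrite /fval mulrDr mulrC (mulrC _ b).
have f_bij : bijective (fun x => f.[x]).
  exact: (eq_bij (fval_bij card_F q_pchar hb2 b_not_power h1 coprime_rq hr) f_eval).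
split; last exact: f_bij.
by apply: bij_on_units_of_bij f_bij; rewrite -f_eval fval0.
Qed.
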